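(* Let $\mathsf{K}$ be a universal class of $\mathcal{L}$-algebras with parametrically definable principal congruences. If $\mathrm{Th}(\mathsf{K})$ has a model completion, then $\mathsf{K}$ has quantifier-free definable principal congruences.
   Context: $\mathcal{L}$ is an algebraic first-order language with at least one constant symbol. A universal class is closed under isomorphic images, subalgebras and ultraproducts. A model completion of a theory $T$ is a model complete theory $T^*$ with the same universal consequences as $T$ such that for every model $M$ of $T$, $T^*$ plus the diagram of $M$ is complete. $\mathrm{Cg}^{\mathbf{A}}(b_1,b_2)$ is the congruence of $\mathbf{A}$ generated by $(b_1,b_2)$. $\mathsf{K}$ has parametrically definable principal congruences if there is a quantifier-free formula $\xi(x_1,x_2,y_1,y_2,\overline{z})$ ($\overline{z}$ a finite set of variables) such that for every $\mathbf{A}\in\mathsf{K}$ and $a_1,a_2,b_1,b_2\in A$: $(a_1,a_2)\in\mathrm{Cg}^{\mathbf{A}}(b_1,b_2)$ iff every $\mathbf{B}\in\mathsf{K}$ extending $\mathbf{A}$ satisfies $\forall\overline{z}.\xi(a_1,a_2,b_1,b_2,\overline{z})$. $\mathsf{K}$ has quantifier-free definable principal congruences if there is a quantifier-free formula $\alpha(x_1,x_2,y_1,y_2)$ with $(a_1,a_2)\in\mathrm{Cg}^{\mathbf{A}}(b_1,b_2)$ iff $\mathbf{A}\models\alpha(a_1,a_2,b_1,b_2)$ for all $\mathbf{A}\in\mathsf{K}$ and $a_1,a_2,b_1,b_2\in A$. *)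

From mathcomp Require Import all_boot.
Set Implicit Arguments.
Unset Strict Implicit.
Unset Printing Implicit Defensive.

Record language := Language { sym : Type; arity : sym -> nat }.

Section FOL.
Variable L : language.

Record algebra := Algebra {
  carrier :> Type;
  op : forall f : sym L, ('I_(arity f) -> carrier) -> carrier }.
Arguments op {a} f args.

Inductive term : Type :=
  | Var : nat -> term
  | App : forall f : sym L, ('I_(arity f) -> term) -> term.
Arguments App f args.

Inductive formula : Type :=
  | FEq  : term -> term -> formula
  | FFalse : formula
  | FNot : formula -> formula
  | FAnd : formula -> formula -> formula
  | FOr  : formula -> formula -> formula
  | FImp : formula -> formula -> formula
  | FAll : nat -> formula -> formula
  | FEx  : nat -> formula -> formula.

Fixpoint term_occ (t : term) (n : nat) : Prop :=
  match t with
  | Var m => m = n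
  | App f args => exists k, term_occ (args k) n
  end.

Fixpoint free_var (phi : formula) (n : nat) : Prop :=
  match phi with
  | FEq t1 t2 => term_occ t1 n \/ term_occ t2 n
  | FFalse => False
  | FNot p => free_var p n
  | FAnd p q | FOr p q | FImp p q => free_var p n \/ free_var q n
  | FAll m p | FEx m p => n <> m /\ free_var p n
  end.

Definition sentence (phi : formula) : Prop := forall n, ~ free_var phi n.

Fixpoint qfree (phi : formula) : Prop :=
  match phi with
  | FEq _ _ | FFalse => True
  | FNot p => qfree p
  | FAnd p q | FOr p q | FImp p q => qfree p /\ qfree q
  | FAll _ _ | FEx _ _ => False
  end.

Inductive universal : formula -> Prop :=
  | univ_qf phi : qfree phi -> universal phi
  | univ_all n phi : universal phi -> universal (FAll n phi).

Fixpoint teval (A : algebra) (v : nat -> A) (t : term) : A :=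
  match t with
  | Var n => v n
  | App f args => op f (fun k => teval v (args k))
  end.

Definition upd (A : Type) (v : nat -> A) (n : nat) (a : A) : nat -> A :=
  fun m => if m == n then a else v m.

Fixpoint sat (A : algebra) (v : nat -> A) (phi : formula) : Prop :=
  match phi with
  | FEq t1 t2 => teval v t1 = teval v t2
  | FFalse => False
  | FNot p => ~ sat v p
  | FAnd p q => sat v p /\ sat v q
  | FOr p q => sat v p \/ sat v q
  | FImp p q => sat v p -> sat v q
  | FAll n p => forall a : A, sat (upd v n a) p
  | FEx n p => exists a : A, sat (upd v n a) p
  end.

(* Theories are sets of formulas; a model satisfies (the universal closure of)
   each of them. *)
Definition theory := formula -> Prop.
Definition model (T : theory) (A : algebra) : Prop :=
  forall phi, T phi -> forall v : nat -> A, sat v phi.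
Definition consequence (T : theory) (phi : formula) : Prop :=
  forall A : algebra, model T A -> forall v : nat -> A, sat v phi.

Definition hom (A B : algebra) (e : A -> B) : Prop :=
  forall f (args : 'I_(arity f) -> A), e (op f args) = op f (fun k => e (args k)).
Definition embedding (A B : algebra) (e : A -> B) : Prop :=
  hom e /\ injective e.
Definition isomorphism (A B : algebra) (e : A -> B) : Prop :=
  hom e /\ bijective e.

Definition class := algebra -> Prop.

Definition ultrafilter (I : Type) (U : (I -> Prop) -> Prop) : Prop :=
  [/\ U (fun _ => True),
      ~ U (fun _ => False),
      (forall S S' : I -> Prop, U S -> (forall i, S i -> S' i) -> U S'),
      (forall S S', U S -> U S' -> U (fun i => S i /\ S' i)) &
      (forall S, U S \/ U (fun i => ~ S i))].

(* B is (isomorphic to) the ultraproduct of the family A modulo U: the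
   canonical projection from the direct product onto B is a surjective
   homomorphism whose kernel is "equal on a U-large set". *)
Definition is_ultraproduct (I : Type) (A : I -> algebra)
    (U : (I -> Prop) -> Prop) (B : algebra) : Prop :=
  exists pi : (forall i, A i) -> B,
    [/\ (forall y : B, exists x, pi x = y),
        (forall x y, pi x = pi y <-> U (fun i => x i = y i)) &
        (forall f (args : 'I_(arity f) -> forall i, A i),
            pi (fun i => op f (fun k => args k i)) = op f (fun k => pi (args k)))].

Definition closed_iso (K : class) : Prop :=
  forall (A B : algebra) (e : A -> B), K A -> isomorphism e -> K B.
Definition closed_sub (K : class) : Prop :=
  forall (A B : algebra) (e : A -> B), K B -> embedding e -> K A.
Definition closed_ultraprod (K : class) : Prop :=
  forall (I : Type) (A : I -> algebra) U B,
    ultrafilter U -> (forall i, K (A i)) -> is_ultraproduct A U B -> K B.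

Definition universal_class (K : class) : Prop :=
  [/\ closed_iso K, closed_sub K & closed_ultraprod K].

Definition Th (K : class) : theory :=
  fun phi => sentence phi /\ forall A, K A -> forall v : nat -> A, sat v phi.

Definition model_complete (T : theory) : Prop :=
  forall (M N : algebra) (e : M -> N), model T M -> model T N -> embedding e ->
    forall phi (v : nat -> M), sat v phi <-> sat (fun n => e (v n)) phi.

(* T* + diagram of M is complete: models of T* + diag(M) are exactly models N
   of T* together with an embedding e : M -> N (interpreting the new
   constants); a sentence of L(M) is a formula phi with parameters v from M. *)
Definition complete_with_diagram (T : theory) (M : algebra) : Prop :=
  forall phi (v : nat -> M),
    (forall (N : algebra) (e : M -> N), model T N -> embedding e ->
        sat (fun n => e (v n)) phi) \/
    (forall (N : algebra) (e : M -> N), model T N -> embedding e ->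
        ~ sat (fun n => e (v n)) phi).

Definition model_completion (Tstar T : theory) : Prop :=
  [/\ (forall phi, Tstar phi -> sentence phi),
      model_complete Tstar,
      (forall phi, universal phi -> sentence phi ->
          (consequence T phi <-> consequence Tstar phi)) &
      (forall M, model T M -> complete_with_diagram Tstar M)].

Definition has_model_completion (T : theory) : Prop :=
  exists Tstar, model_completion Tstar T.

Definition congruence (A : algebra) (theta : A -> A -> Prop) : Prop :=
  [/\ (forall a, theta a a),
      (forall a b, theta a b -> theta b a),
      (forall a b c, theta a b -> theta b c -> theta a c) &
      (forall f (x y : 'I_(arity f) -> A),
          (forall k, theta (x k) (y k)) -> theta (op f x) (op f y))].

Definition Cg (A : algebra) (b1 b2 : A) : A -> A -> Prop :=
  fun a1 a2 => forall theta, congruence theta -> theta b1 b2 -> theta a1 a2.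

(* Variables x1,x2,y1,y2 are the variables 0,1,2,3. *)
Definition agrees4 (A : Type) (v : nat -> A) (a1 a2 b1 b2 : A) : Prop :=
  [/\ v 0 = a1, v 1 = a2, v 2 = b1 & v 3 = b2].

(* parametrically definable principal congruences: the variables z are all
   the remaining (finitely many) variables of xi, universally quantified. *)
Definition param_def_pc (K : class) : Prop :=
  exists xi : formula, qfree xi /\
    forall (A : algebra), K A -> forall a1 a2 b1 b2 : A,
      Cg b1 b2 a1 a2 <->
      (forall (B : algebra) (e : A -> B), K B -> embedding e ->
         forall w : nat -> B, agrees4 w (e a1) (e a2) (e b1) (e b2) -> sat w xi).

Definition qf_def_pc (K : class) : Prop :=
  exists alpha : formula,
    [/\ qfree alpha,
        (forall n, free_var alpha n -> n < 4) &
        forall (A : algebra), K A -> forall a1 a2 b1 b2 : A,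
          Cg b1 b2 a1 a2 <->
          (forall w : nat -> A, agrees4 w a1 a2 b1 b2 -> sat w alpha)].

End FOL.

(* Let xi define principal congruences parametrically, let T* be the model completion of
   Th(K), and let phi := forall z, xi, whose free variables are x1 x2 y1 y2.  Since T* and
   Th(K) have the same universal consequences, Robinson's diagram argument shows that every
   member of K embeds into a model of T* and that every model of T* lies in K.  For A in K
   inside a model N of T*, (a1,a2) is in Cg(b1,b2) iff N |= phi(a1,a2,b1,b2): the forward
   direction because N is in K; conversely, completeness of T* plus the diagram of A makes
   phi hold in a model of T* above any extension B of A in K, and universal formulas descend
   to B.  Two quadruples in models of T* with the same quantifier-free type generate
   isomorphic substructures, which lie in K, so the same completeness shows that they agree
   on phi.  By compactness (realised with ultraproducts and Los's theorem) phi is then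
   T*-equivalent to a quantifier-free alpha, and alpha, being preserved by embeddings,
   defines principal congruences in K. *)

From mathcomp Require Import all_boot zify.
From mathcomp Require classical_sets filter.
From Stdlib Require Import Classical ClassicalEpsilon FunctionalExtensionality.
From Stdlib Require Import ProofIrrelevance PropExtensionality.

Set Implicit Arguments.
Unset Strict Implicit.
Unset Printing Implicit Defensive.

Lemma dep_functional_choice (I : Type) (A : I -> Type) (P : forall i, A i -> Prop) :
  (forall i, exists a, P i a) -> exists x : forall i, A i, forall i, P i (x i).
Proof.
move=> H; exists (fun i => proj1_sig (constructive_indefinite_description _ (H i))).
by move=> i; exact: proj2_sig.
Qed.

Lemma sig_eq (T : Type) (P : T -> Prop) (u v : {x | P x}) :
  proj1_sig u = proj1_sig v -> u = v.
Proof. exact: eq_sig_hprop (fun x => proof_irrelevance (P x)) u v. Qed.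

Lemma comp_upd (X Y : Type) (e : X -> Y) (v : nat -> X) n a :
  (fun m => e (upd v n a m)) = upd (fun m => e (v m)) n (e a).
Proof. by apply: functional_extensionality => m; rewrite /upd; case: eqP. Qed.

Section Semantics.
Variable L : language.
Implicit Types (A B : algebra L) (phi : formula L) (t : term L).

Fixpoint term_nested_ind (P : term L -> Prop) (HV : forall n, P (Var L n))
    (HA : forall f (args : 'I_(arity f) -> term L), (forall k, P (args k)) -> P (App args))
    t : P t :=
  match t with
  | Var n => HV n
  | App f args => HA f args (fun k => term_nested_ind HV HA (args k))
  end.

Lemma teval_hom A B (e : A -> B) (v : nat -> A) t :
  hom e -> teval (fun n => e (v n)) t = e (teval v t).
Proof.
move=> he; elim/term_nested_ind: t => [n|f args IH] //=.
by rewrite he; congr op; apply: functional_extensionality.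
Qed.

Lemma teval_ext A (v w : nat -> A) t :
  (forall n, term_occ t n -> v n = w n) -> teval v t = teval w t.
Proof.
elim/term_nested_ind: t => [n|f args IH] vw /=; first exact: vw.
congr op; apply: functional_extensionality => k; apply: IH => n occ.
by apply: vw; exists k.
Qed.

Fixpoint rename (g : nat -> nat) t : term L :=
  match t with
  | Var n => Var L (g n)
  | App f args => App (fun k => rename g (args k))
  end.

Lemma teval_rename A (v : nat -> A) g t :
  teval v (rename g t) = teval (fun n => v (g n)) t.
Proof.
elim/term_nested_ind: t => [n|f args IH] //=.
by congr op; apply: functional_extensionality.
Qed.

Lemma term_occ_rename g t n : term_occ (rename g t) n -> exists m, n = g m.
Proof.
elim/term_nested_ind: t => [m|f args IH] /=; first by move<-; exists m.
by case=> k /IH.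
Qed.

Lemma sat_ext A phi (v w : nat -> A) :
  (forall n, free_var phi n -> v n = w n) -> (sat v phi <-> sat w phi).
Proof.
elim: phi v w => [t1 t2||p IH|p IHp q IHq|p IHp q IHq|p IHp q IHq|m p IH|m p IH] v w vw /=.
- by rewrite (@teval_ext _ v w t1) ?(@teval_ext _ v w t2) // => n occ; apply: vw; [right|left].
- by [].
- by rewrite (IH v w vw).
- by rewrite (IHp v w) ?(IHq v w) // => n fv; apply: vw; [right|left].
- by rewrite (IHp v w) ?(IHq v w) // => n fv; apply: vw; [right|left].
- by rewrite (IHp v w) ?(IHq v w) // => n fv; apply: vw; [right|left].
- have vw_upd a n : free_var p n -> upd v m a n = upd w m a n.
    by rewrite /upd; case: eqP => // /eqP nm fv; apply: vw; split=> //; apply/eqP.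
  by split=> H a; [rewrite -(IH _ _ (vw_upd a))|rewrite (IH _ _ (vw_upd a))].
- have vw_upd a n : free_var p n -> upd v m a n = upd w m a n.
    by rewrite /upd; case: eqP => // /eqP nm fv; apply: vw; split=> //; apply/eqP.
  by split=> -[a H]; exists a; [rewrite -(IH _ _ (vw_upd a))|rewrite (IH _ _ (vw_upd a))].
Qed.

Lemma sat_qfree_embedding A B (e : A -> B) (v : nat -> A) phi :
  embedding e -> qfree phi -> (sat v phi <-> sat (fun n => e (v n)) phi).
Proof.
move=> [he inj_e].
elim: phi => [t1 t2||p IH|p IHp q IHq|p IHp q IHq|p IHp q IHq|m p IH|m p IH] //= qf.
- by rewrite !teval_hom //; split=> [->|/inj_e].
- by rewrite IH.
- by case: qf => /IHp -> /IHq ->.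
- by case: qf => /IHp -> /IHq ->.
- by case: qf => /IHp -> /IHq ->.
Qed.

Lemma sat_universal_embedding A B (e : A -> B) (v : nat -> A) phi :
  embedding e -> universal phi -> sat (fun n => e (v n)) phi -> sat v phi.
Proof.
move=> emb univ; elim: univ v => [p qf|n p _ IH] v /=.
  by move/(sat_qfree_embedding v emb qf).
by move=> H a; apply: IH; rewrite comp_upd; apply: H.
Qed.

Lemma Cg_hom A B (e : A -> B) (a1 a2 b1 b2 : A) :
  hom e -> Cg b1 b2 a1 a2 -> Cg (e b1) (e b2) (e a1) (e a2).
Proof.
move=> he H theta [refl sym trans compat]; apply: (H (fun x y => theta (e x) (e y))).
split=> [a|a b|a b c|f x y xy] //; [exact: sym|exact: trans|].
by rewrite !he; apply: compat.
Qed.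

Lemma embedding_id A : embedding (fun x : A => x).
Proof. by split. Qed.

Lemma embedding_comp A B (C : algebra L) (f : A -> B) (g : B -> C) :
  embedding f -> embedding g -> embedding (fun x => g (f x)).
Proof. by move=> [hf inj_f] [hg inj_g]; split=> [s args|x y /inj_g /inj_f]; rewrite ?hf ?hg. Qed.

End Semantics.

Section UniversalClosure.
Variable L : language.
Implicit Types (A : algebra L) (phi : formula L) (t : term L).

Fixpoint foralls (l : seq nat) phi : formula L :=
  if l is n :: l' then FAll n (foralls l' phi) else phi.

Lemma sat_foralls A l phi (v : nat -> A) :
  sat v (foralls l phi) <-> forall w, (forall n, n \notin l -> w n = v n) -> sat w phi.
Proof.
elim: l v => [|m l IH] v /=.
  by split=> [H w wv|]; [rewrite (sat_ext (w := v)) // => n _; exact: wv|apply].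
split=> H.
- move=> w wv; apply: (proj1 (IH _) (H (w m))) => n n_l.
  rewrite /upd; case: eqP => [->//|/eqP nm]; apply: wv.
  by rewrite in_cons negb_or nm.
- move=> a; apply/IH => w wv; apply: H => n; rewrite in_cons negb_or => /andP[nm n_l].
  by rewrite wv // /upd (negbTE nm).
Qed.

Lemma free_var_foralls l phi n : free_var (foralls l phi) n -> n \notin l /\ free_var phi n.
Proof.
elim: l => [|m l IH] //= [nm /IH [n_l fv]]; split=> //.
by rewrite in_cons negb_or n_l andbT; apply/eqP.
Qed.

Fixpoint tbound t : nat :=
  match t with
  | Var n => n.+1
  | App f args => \max_(k < arity f) tbound (args k)
  end.

Lemma tbound_occ t n : term_occ t n -> n < tbound t.
Proof.
elim/term_nested_ind: t => [m|f args IH] /=; first by move->.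
by case=> k /IH lt_n; apply: leq_trans lt_n (leq_bigmax _).
Qed.

Fixpoint fbound phi : nat :=
  match phi with
  | FEq t1 t2 => maxn (tbound t1) (tbound t2)
  | FFalse => 0
  | FNot p | FAll _ p | FEx _ p => fbound p
  | FAnd p q | FOr p q | FImp p q => maxn (fbound p) (fbound q)
  end.

Lemma fbound_free phi n : free_var phi n -> n < fbound phi.
Proof.
elim: phi => [t1 t2||p IH|p IHp q IHq|p IHp q IHq|p IHp q IHq|m p IH|m p IH] //=;
  rewrite ?leq_max.
- by case=> /tbound_occ ->; rewrite ?orbT.
- by case=> [/IHp|/IHq] ->; rewrite ?orbT.
- by case=> [/IHp|/IHq] ->; rewrite ?orbT.
- by case=> [/IHp|/IHq] ->; rewrite ?orbT.
- by case=> _ /IH.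
- by case=> _ /IH.
Qed.

Definition forall_from k phi := foralls (iota k (fbound phi - k)) phi.

Lemma free_var_forall_from k phi n : free_var (forall_from k phi) n -> n < k.
Proof.
move=> /free_var_foralls [+ /fbound_free lt_n]; rewrite mem_iota; lia.
Qed.

Lemma sat_forall_from A k phi (v : nat -> A) :
  sat v (forall_from k phi) <-> forall w, (forall n, n < k -> w n = v n) -> sat w phi.
Proof.
rewrite sat_foralls; split=> H w wv.
- pose w' n := if n < fbound phi then w n else v n.
  have: sat w' phi by apply: H => n; rewrite mem_iota /w'; case: ifP => ? ?; [apply: wv; lia|].
  by rewrite (sat_ext (w := w)) // => n /fbound_free lt_n; rewrite /w' lt_n.
- by apply: H => n lt_nk; apply: wv; rewrite mem_iota; lia.
Qed.

Lemma universal_forall_from k phi : qfree phi -> universal (forall_from k phi).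
Proof. by move=> qf; rewrite /forall_from; elim: iota => [|m l IH]; constructor. Qed.

Lemma sentence_forall_from0 phi : sentence (forall_from 0 phi).
Proof. by move=> n /free_var_forall_from. Qed.

End UniversalClosure.

Section Ultrafilter.
Variables (I : Type) (U : (I -> Prop) -> Prop).
Hypothesis HU : ultrafilter U.
Implicit Types S : I -> Prop.

Lemma ultraT : U (fun _ => True). Proof. by case: HU. Qed.

Lemma ultra_neq0 : ~ U (fun _ => False). Proof. by case: HU. Qed.

Lemma ultraS S S' : U S -> (forall i, S i -> S' i) -> U S'.
Proof. by case: HU => _ _ + _ _; apply. Qed.

Lemma ultraI S S' : U S -> U S' -> U (fun i => S i /\ S' i).
Proof. by case: HU => _ _ _ + _; apply. Qed.

Lemma ultraC S : U S \/ U (fun i => ~ S i).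
Proof. by case: HU => _ _ _ _; apply. Qed.

Lemma ultra_all S : (forall i, S i) -> U S.
Proof. by move=> allS; apply: ultraS ultraT _. Qed.

Lemma ultraN S : ~ U S <-> U (fun i => ~ S i).
Proof.
split; first by case: (ultraC S).
by move=> nS uS; apply: ultra_neq0; apply: ultraS (ultraI nS uS) _ => i [].
Qed.

Lemma ultra_and S S' : U (fun i => S i /\ S' i) <-> U S /\ U S'.
Proof.
split=> [uSS'|[uS uS']]; last exact: ultraI.
by split; apply: ultraS uSS' _ => i [].
Qed.

Lemma ultra_or S S' : U (fun i => S i \/ S' i) <-> U S \/ U S'.
Proof.
split=> [uSS'|[uS|uS']]; [|by apply: ultraS uS _; left|by apply: ultraS uS' _; right].
case: (ultraC S) => [|nS]; first by left.
by right; apply: ultraS (ultraI uSS' nS) _ => i [[]].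
Qed.

Lemma ultra_imp S S' : U (fun i => S i -> S' i) <-> (U S -> U S').
Proof.
split=> [uSS' uS|H]; first by apply: ultraS (ultraI uSS' uS) _ => i [].
case: (ultraC S) => [/H uS'|nS]; first by apply: ultraS uS' _.
by apply: ultraS nS _.
Qed.

Lemma ultra_bigI n (S : 'I_n -> I -> Prop) :
  (forall k, U (S k)) -> U (fun i => forall k, S k i).
Proof.
move=> uS; suff: U (fun i => forall k, k \in enum 'I_n -> S k i).
  by move/ultraS; apply=> i H k; apply: H; rewrite mem_enum.
elim: (enum 'I_n) => [|k s IH]; first exact: ultra_all.
by apply: ultraS (ultraI (uS k) IH) _ => i [Sk Ss] k'; rewrite in_cons => /orP[/eqP->|/Ss].
Qed.

End Ultrafilter.

Section UltrafilterExistence.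
Import classical_sets filter.

Lemma ultrafilter_of_base (I J : Type) (B : J -> I -> Prop) :
  inhabited J ->
  (forall j1 j2, exists j3, forall i, B j3 i -> B j1 i /\ B j2 i) ->
  (forall j, exists i, B j i) ->
  exists U : (I -> Prop) -> Prop, ultrafilter U /\ forall j, U (B j).
Proof.
move=> [j0] directed nonempty.
have base_filter : Filter (filter_from setT B).
  apply: filter_from_filter; first by exists j0.
  by move=> j1 j2 _ _; have [j3 H3] := directed j1 j2; exists j3.
have : ProperFilter (filter_from setT B).
  by apply: filter_from_proper => j _; have [i Hi] := nonempty j; exists i.
move=> /ultraFilterLemma [G [ultraG sub]].
have properG : ProperFilter G := ultra_proper.
exists G; split; last by move=> j; apply: sub; exists j.
split.
- exact: filterT.
- by move=> G0; apply: (filter_not_empty G).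
- by move=> S S' GS SS'; apply: filterS GS.
- by move=> S S'; apply: filterI.
- by move=> S; apply: in_ultra_setVsetC.
Qed.

End UltrafilterExistence.

Section Ultraproduct.
Variables (L : language) (I : Type) (A : I -> algebra L) (U : (I -> Prop) -> Prop).
Hypothesis HU : ultrafilter U.

(* Elements are represented by their classes modulo U-almost-everywhere equality. *)
Definition up_carrier :=
  {P : (forall i, A i) -> Prop | exists x, P = fun y => U (fun i => x i = y i)}.

Definition up_pi (x : forall i, A i) : up_carrier :=
  exist _ (fun y => U (fun i => x i = y i)) (ex_intro _ x erefl).

Definition up_rep (c : up_carrier) : forall i, A i :=
  proj1_sig (constructive_indefinite_description _ (proj2_sig c)).

Lemma up_repK c : up_pi (up_rep c) = c.
Proof.
apply: sig_eq; rewrite /up_rep /=.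
by case: (constructive_indefinite_description _ _) => x /= ->.
Qed.

Lemma up_surj c : exists x, up_pi x = c.
Proof. by exists (up_rep c); rewrite up_repK. Qed.

Lemma up_ker x y : up_pi x = up_pi y <-> U (fun i => x i = y i).
Proof.
split=> [/(f_equal (fun c => proj1_sig c y)) /= ->|xy]; first exact: (ultra_all HU).
apply: sig_eq; apply: functional_extensionality => z /=.
apply: propositional_extensionality.
by split=> H; apply: (ultraS HU (ultraI HU xy H)) => i [? ?]; congruence.
Qed.

Definition up_op f (args : 'I_(arity f) -> up_carrier) : up_carrier :=
  up_pi (fun i => op (fun k => up_rep (args k) i)).
Arguments up_op : simpl never.

Definition up_alg : algebra L := Algebra up_op.

Lemma up_hom f (args : 'I_(arity f) -> forall i, A i) :
  up_pi (fun i => op (fun k => args k i)) = @op L up_alg f (fun k => up_pi (args k)).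
Proof.
apply/up_ker; have rep_args k : U (fun i => args k i = up_rep (up_pi (args k)) i).
  by apply/up_ker; rewrite up_repK.
apply: (ultraS HU (ultra_bigI HU rep_args)) => i args_i.
by congr op; apply: functional_extensionality.
Qed.

Lemma up_is_ultraproduct : is_ultraproduct A U up_alg.
Proof. exists up_pi; split; [exact: up_surj|exact: up_ker|exact: up_hom]. Qed.

Lemma teval_up (v : nat -> forall i, A i) t :
  teval (fun n => up_pi (v n) : up_alg) t = up_pi (fun i => teval (fun n => v n i) t).
Proof.
elim/term_nested_ind: t => [n|f args IH] //=.
rewrite (up_hom (fun k i => teval (fun n => v n i) (args k))).
by rewrite -(functional_extensionality _ _ IH).
Qed.

Hypothesis inhabited_factors : forall i, inhabited (A i).

Lemma ultra_exists (P : forall i, A i -> Prop) :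
  (exists x : forall i, A i, U (fun i => P i (x i))) <-> U (fun i => exists a, P i a).
Proof.
split=> [[x Px]|H]; first by apply: (ultraS HU Px) => i; exists (x i).
have [x Px] : exists x : forall i, A i, forall i, (exists a, P i a) -> P i (x i).
  apply: (dep_functional_choice (P := fun i a => (exists b, P i b) -> P i a)) => i.
  case: (classic (exists a, P i a)) => [[a Pa]|nP]; first by exists a.
  by case: (inhabited_factors i) => a; exists a => /nP.
by exists x; apply: (ultraS HU H).
Qed.

Lemma ultra_forall (P : forall i, A i -> Prop) :
  (forall x : forall i, A i, U (fun i => P i (x i))) <-> U (fun i => forall a, P i a).
Proof.
split=> [H|H x]; last by apply: (ultraS HU H).
apply: NNPP => /(ultraN HU) nP.
have [x /(ultraN HU)] : exists x : forall i, A i, U (fun i => ~ P i (x i)).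
  by apply/(ultra_exists (fun i a => ~ P i a)); apply: (ultraS HU nP) => i; apply: not_all_ex_not.
exact.
Qed.

Lemma sat_upd_pointwise (v : nat -> forall i, A i) m x phi i :
  sat (fun n => upd v m x n i) phi <-> sat (upd (fun n => v n i) m (x i)) phi.
Proof. by rewrite (comp_upd (fun y : forall i, A i => y i)). Qed.

Theorem los phi (v : nat -> forall i, A i) :
  sat (fun n => up_pi (v n) : up_alg) phi <-> U (fun i => sat (fun n => v n i) phi).
Proof.
elim: phi v => [t1 t2||p IH|p IHp q IHq|p IHp q IHq|p IHp q IHq|m p IH|m p IH] v /=;
  last 2 first.
1-2: have IHupd x : sat (upd (fun n => up_pi (v n) : up_alg) m (up_pi x)) p <->
                    U (fun i => sat (upd (fun n => v n i) m (x i)) p) by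
  rewrite -(comp_upd up_pi) IH; split=> /(ultraS HU); apply=> i /sat_upd_pointwise.
- rewrite -ultra_forall; split=> H x; first exact/IHupd.
  by have [y <-] := up_surj x; apply/IHupd.
- rewrite -ultra_exists; split=> [[a]|[x /IHupd]]; last by exists (up_pi x).
  by have [x <-] := up_surj a => /IHupd; exists x.
- by rewrite !teval_up up_ker.
- by split=> //; apply: ultra_neq0 HU.
- by rewrite IH (ultraN HU).
- by rewrite IHp IHq (ultra_and HU).
- by rewrite IHp IHq (ultra_or HU).
- by rewrite IHp IHq (ultra_imp HU).
Qed.

Lemma model_up (T : theory L) : (forall i, model T (A i)) -> model T up_alg.
Proof.
move=> models phi T_phi w; have [v vw] := dep_functional_choice (fun n => up_surj (w n)).
have -> : w = (fun n => up_pi (v n)) by apply: functional_extensionality.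
by apply/los; apply: (ultra_all HU) => i; apply: models.
Qed.

End Ultraproduct.

Section Compactness.
Variable L : language.
Hypothesis inhabited_algebra : forall A : algebra L, inhabited A.

Theorem ultraproduct_compactness (C : class L) (X J : Type) (cond : J -> formula L)
    (par : J -> nat -> X) :
  (forall (I : Type) (M : I -> algebra L) U, ultrafilter U -> (forall i, C (M i)) ->
     C (up_alg M U)) ->
  inhabited J ->
  (forall j1 j2, exists j3, forall (M : algebra L) (h : X -> M),
     sat (fun n => h (par j3 n)) (cond j3) ->
     sat (fun n => h (par j1 n)) (cond j1) /\ sat (fun n => h (par j2 n)) (cond j2)) ->
  (forall j, exists (M : algebra L) (h : X -> M), C M /\ sat (fun n => h (par j n)) (cond j)) ->
  exists (M : algebra L) (h : X -> M), C M /\ forall j, sat (fun n => h (par j n)) (cond j).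
Proof.
move=> C_up inhJ directed /dep_functional_choice [M /dep_functional_choice [h Mh]].
have [U [HU Ubase]] : exists U, ultrafilter U /\
    forall j, U (fun i => sat (fun n => h i (par j n)) (cond j)).
  apply: ultrafilter_of_base => // [j1 j2|j]; last by exists j; case: (Mh j).
  by have [j3 H3] := directed j1 j2; exists j3 => i; apply: H3.
exists (up_alg M U), (fun x => up_pi U (fun i => h i x)); split.
  by apply: C_up => // j; case: (Mh j).
by move=> j; apply/(los HU (fun i => inhabited_algebra (M i))).
Qed.

End Compactness.

Fixpoint cidx (T : Type) (x : T) (s : seq T) : nat :=
  if s is y :: s' then
    if excluded_middle_informative (x = y) then 0 else (cidx x s').+1
  else 0.

Lemma nth_cidx (T : Type) (x d : T) s : List.In x s -> nth d s (cidx x s) = x.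
Proof.
elim: s => [|y s IH] //= x_s; case: excluded_middle_informative => [xy|ne] /=.
  by rewrite xy.
by apply: IH; case: x_s => // E; case: ne.
Qed.

Lemma In_mem (T : eqType) (x : T) (s : seq T) : x \in s -> List.In x s.
Proof. by elim: s => //= y s IH; rewrite in_cons => /orP[/eqP->|/IH]; [left|right]. Qed.

Section Diagram.
Variables (L : language) (A : algebra L).

(* [FNe x y] is vacuous when [x = y], so the identity map satisfies every fact. *)
Inductive fact : Type :=
  | FOp (f : sym L) (args : 'I_(arity f) -> A)
  | FNe (x y : A).

Definition holds (M : algebra L) (h : A -> M) (F : fact) : Prop :=
  match F with
  | FOp f args => h (op args) = op (fun k => h (args k))
  | FNe x y => x <> y -> h x <> h y
  end.

Lemma embedding_of_facts (M : algebra L) (h : A -> M) : (forall F, holds h F) -> embedding h.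
Proof.
move=> H; split=> [f args|x y hxy]; first exact: (H (FOp args)).
by apply: NNPP => ne; apply: (H (FNe x y)).
Qed.

Definition fact_elems (F : fact) : seq A :=
  match F with
  | FOp f args => op args :: map args (enum 'I_(arity f))
  | FNe x y => [:: x; y]
  end.

Lemma holds_ext (M : algebra L) (h h' : A -> M) F :
  (forall x, List.In x (fact_elems F) -> h x = h' x) -> holds h F <-> holds h' F.
Proof.
case: F => [f args|x y] /= hh'; last by rewrite hh' ?(hh' y); [|right; left|left].
rewrite hh'; last by left.
suff -> : (fun k => h (args k)) = (fun k => h' (args k)) by [].
apply: functional_extensionality => k; apply: hh'; right; apply: List.in_map.
by apply: In_mem; rewrite mem_enum.
Qed.

Definition diag_elems (D : seq fact) : seq A := List.flat_map fact_elems D.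

Definition fact_form (s : seq A) (F : fact) : formula L :=
  match F with
  | FOp f args => FEq (Var L (cidx (op args) s)) (App (fun k => Var L (cidx (args k) s)))
  | FNe x y =>
      if excluded_middle_informative (x = y) then FNot (FFalse L)
      else FNot (FEq (Var L (cidx x s)) (Var L (cidx y s)))
  end.

Definition diag_form_in (s : seq A) (D : seq fact) : formula L :=
  foldr (fun F p => FAnd (fact_form s F) p) (FNot (FFalse L)) D.

(* Variable [n] of the diagram formula of [D] stands for the [n]-th element of [diag_elems D]. *)
Definition diag_form (D : seq fact) : formula L := diag_form_in (diag_elems D) D.

Lemma qfree_diag_form D : qfree (diag_form D).
Proof.
rewrite /diag_form; elim: D (diag_elems D) => [|[f args|x y] D IH] s //=.
by case: excluded_middle_informative.
Qed.

Lemma sat_diag_form_in (M : algebra L) (w : nat -> M) s D :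
  sat w (diag_form_in s D) <-> forall F, List.In F D -> holds (fun x => w (cidx x s)) F.
Proof.
have sat_fact F : sat w (fact_form s F) <-> holds (fun x => w (cidx x s)) F.
  case: F => [f args|x y] //=; case: excluded_middle_informative => [xy|ne] /=.
    by split=> // _ [].
  by split=> [H _|]; [exact: H|apply].
elim: D => [|F D IH] /=; first by split=> [_ F []|_ []].
rewrite sat_fact IH; split=> [[HF HD] F' [<-|/HD]|H] //.
by split=> [|F' F'_D]; apply: H; [left|right].
Qed.

Lemma sat_diag_form_nth (M : algebra L) (h : A -> M) (d : A) D :
  sat (fun n => h (nth d (diag_elems D) n)) (diag_form D) <->
  forall F, List.In F D -> holds h F.
Proof.
have nth_holds F : List.In F D ->
    holds (fun x => h (nth d (diag_elems D) (cidx x (diag_elems D)))) F <-> holds h F.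
  move=> F_D; apply: holds_ext => x x_F; rewrite nth_cidx //.
  by apply/List.in_flat_map; exists F.
by rewrite sat_diag_form_in; split=> H F F_D; [rewrite -nth_holds|rewrite nth_holds]; auto.
Qed.

Section EmbeddingIntoClass.
Hypothesis inhabited_algebra : forall B : algebra L, inhabited B.
Variable C : class L.
Hypothesis C_up : forall (I : Type) (M : I -> algebra L) U,
  ultrafilter U -> (forall i, C (M i)) -> C (up_alg M U).

(* Robinson's diagram argument: a finite piece of the diagram of A that no member of C
   satisfies yields a universal sentence true in C and false in A. *)
Theorem embedding_of_universal_theory :
  (forall phi, universal phi -> sentence phi ->
     (forall M, C M -> forall v : nat -> M, sat v phi) -> forall v : nat -> A, sat v phi) ->
  exists (M : algebra L) (e : A -> M), C M /\ embedding e.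
Proof.
move=> A_univ; have [d] := inhabited_algebra A.
have finsat D : exists (M : algebra L) (h : A -> M),
    C M /\ sat (fun n => h (nth d (diag_elems D) n)) (diag_form D).
  apply: NNPP => unsat.
  have A_sigma : forall v : nat -> A, sat v (forall_from 0 (FNot (diag_form D))).
    apply: A_univ; [exact/universal_forall_from/qfree_diag_form|exact: sentence_forall_from0|].
    move=> M CM v; apply/sat_forall_from => w _ /sat_diag_form_in wD; apply: unsat.
    pose h x := w (cidx x (diag_elems D)).
    by exists M, h; split; last exact/(sat_diag_form_nth h).
  have /sat_forall_from /(_ _ (fun _ _ => erefl)) := A_sigma (nth d (diag_elems D)); apply.
  by apply/(sat_diag_form_nth (fun x : A => x)) => -[f args|x y] _.
have directed D1 D2 : exists D3, forall (M : algebra L) (h : A -> M),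
    sat (fun n => h (nth d (diag_elems D3) n)) (diag_form D3) ->
    sat (fun n => h (nth d (diag_elems D1) n)) (diag_form D1) /\
    sat (fun n => h (nth d (diag_elems D2) n)) (diag_form D2).
  exists (D1 ++ D2) => M h /sat_diag_form_nth H.
  by split; apply/sat_diag_form_nth => F F_D; apply: H; apply/List.in_app_iff; [left|right].
have [M [h [CM Hh]]] :=
  ultraproduct_compactness inhabited_algebra C_up (inhabits [::]) directed finsat.
exists M, h; split=> //; apply: embedding_of_facts => F.
by have /sat_diag_form_nth := Hh [:: F]; apply; left.
Qed.

End EmbeddingIntoClass.
End Diagram.

Section CommonSubstructure.
Variables (L : language) (N1 N2 : algebra L) (a1 : nat -> N1) (a2 : nat -> N2).
Hypothesis same_equations :
  forall t t' : term L, teval a1 t = teval a1 t' <-> teval a2 t = teval a2 t'.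

(* The substructure generated by [a1] in [N1], realised as the graph of the partial
   isomorphism [teval a1 t |-> teval a2 t]. *)
Definition joint_carrier := {p : N1 * N2 | exists t, p = (teval a1 t, teval a2 t)}.

Lemma joint_op_closed f (args : 'I_(arity f) -> joint_carrier) :
  exists t, (op (fun k => (proj1_sig (args k)).1), op (fun k => (proj1_sig (args k)).2)) =
            (teval a1 t, teval a2 t).
Proof.
have [ts Hts] := dep_functional_choice (fun k => proj2_sig (args k)).
by exists (App ts); congr pair; congr op; apply: functional_extensionality => k /=; rewrite Hts.
Qed.

Definition joint_alg : algebra L := Algebra (fun f args => exist _ _ (@joint_op_closed f args)).

Lemma joint_embedding (N : algebra L) (pr : N1 * N2 -> N) :
  (forall t t', pr (teval a1 t, teval a2 t) = pr (teval a1 t', teval a2 t') ->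
     teval a1 t = teval a1 t' /\ teval a2 t = teval a2 t') ->
  hom (fun x : joint_alg => pr (proj1_sig x)) ->
  embedding (fun x : joint_alg => pr (proj1_sig x)).
Proof.
move=> pr_inj pr_hom; split=> // x x'.
have [[t xt] [t' x't']] := (proj2_sig x, proj2_sig x').
by rewrite xt x't' => /pr_inj [E1 E2]; apply: sig_eq; rewrite xt x't' E1 E2.
Qed.

Lemma common_substructure :
  exists (C : algebra L) (c : nat -> C) (e1 : C -> N1) (e2 : C -> N2),
    [/\ embedding e1, embedding e2, forall n, e1 (c n) = a1 n & forall n, e2 (c n) = a2 n].
Proof.
exists joint_alg, (fun n => exist _ (a1 n, a2 n) (ex_intro _ (Var L n) erefl)).
exists (fun x => (proj1_sig x).1), (fun x => (proj1_sig x).2); split=> //.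
- by apply: joint_embedding => // t t' /= E; split=> //; apply/same_equations.
- by apply: joint_embedding => // t t' /= E; split=> //; apply/same_equations.
Qed.

End CommonSubstructure.

Section QfDefinability.
Variable L : language.
Hypothesis inhabited_algebra : forall A : algebra L, inhabited A.
Variable T : theory L.
Variable Delta : formula L -> Prop.
Hypothesis Delta_true : Delta (FNot (FFalse L)).
Hypothesis Delta_false : Delta (FFalse L).
Hypothesis Delta_and : forall p q, Delta p -> Delta q -> Delta (FAnd p q).
Hypothesis Delta_or : forall p q, Delta p -> Delta q -> Delta (FOr p q).
Variable phi : formula L.
Hypothesis phi_preserved : forall (N1 N2 : algebra L) (a1 : nat -> N1) (a2 : nat -> N2),
  model T N1 -> model T N2 -> (forall th, Delta th -> sat a1 th -> sat a2 th) ->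
  sat a1 phi -> sat a2 phi.

Let model_T_up (I : Type) (M : I -> algebra L) U :
  ultrafilter U -> (forall i, model T (M i)) -> model T (up_alg M U).
Proof. by move=> HU; apply: (model_up HU (fun i => inhabited_algebra (M i))). Qed.

Definition entails_phi (th : formula L) :=
  forall (M : algebra L) (b : nat -> M), model T M -> sat b th -> sat b phi.

Lemma Delta_entails_cover (N : algebra L) (a : nat -> N) :
  model T N -> sat a phi -> exists2 th, Delta th /\ sat a th & entails_phi th.
Proof.
move=> TN a_phi; apply: NNPP => no_cover.
pose J := {th | Delta th /\ sat a th}.
have finsat (j : J) : exists (M : algebra L) (b : nat -> M),
    model T M /\ sat b (FAnd (FNot phi) (proj1_sig j)).
  apply: NNPP => unsat; apply: no_cover; exists (proj1_sig j); first exact: proj2_sig j.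
  by move=> M b TM b_j; apply: NNPP => b_phi; apply: unsat; exists M, b.
have directed (j1 j2 : J) : exists j3 : J, forall (M : algebra L) (b : nat -> M),
    sat b (FAnd (FNot phi) (proj1_sig j3)) ->
    sat b (FAnd (FNot phi) (proj1_sig j1)) /\ sat b (FAnd (FNot phi) (proj1_sig j2)).
  case: j1 j2 => [p [Dp ap]] [q [Dq aq]].
  by exists (exist _ (FAnd p q) (conj (Delta_and Dp Dq) (conj ap aq))) => M b /= [? []].
have j_true : J by exists (FNot (FFalse L)); split=> // [].
have [M [b [TM Hb]]] := ultraproduct_compactness inhabited_algebra (par := fun _ n => n)
  model_T_up (inhabits j_true) directed finsat.
have [b_nphi _] := Hb j_true; apply: b_nphi; apply: phi_preserved TN TM _ a_phi.
by move=> th Dth a_th; have [] := Hb (exist _ th (conj Dth a_th)).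
Qed.

Theorem definable_of_preserved :
  exists al, Delta al /\
    forall (N : algebra L) (a : nat -> N), model T N -> (sat a phi <-> sat a al).
Proof.
apply: NNPP => not_definable.
pose J := {th | Delta th /\ entails_phi th}.
have finsat (j : J) : exists (M : algebra L) (b : nat -> M),
    model T M /\ sat b (FAnd phi (FNot (proj1_sig j))).
  apply: NNPP => unsat; apply: not_definable; exists (proj1_sig j).
  have [Dj j_phi] := proj2_sig j; split=> // N a TN; split=> [a_phi|/j_phi]; last exact.
  by apply: NNPP => a_j; apply: unsat; exists N, a.
have directed (j1 j2 : J) : exists j3 : J, forall (M : algebra L) (b : nat -> M),
    sat b (FAnd phi (FNot (proj1_sig j3))) ->
    sat b (FAnd phi (FNot (proj1_sig j1))) /\ sat b (FAnd phi (FNot (proj1_sig j2))).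
  case: j1 j2 => [p [Dp p_phi]] [q [Dq q_phi]].
  have pq_phi : entails_phi (FOr p q) by move=> M b TM [/p_phi|/q_phi]; apply.
  exists (exist _ (FOr p q) (conj (Delta_or Dp Dq) pq_phi)) => M b /= [b_phi npq].
  by split; split=> // ?; apply: npq; [left|right].
have j_false : J by exists (FFalse L); split=> // M b _ [].
have [M [b [TM Hb]]] := ultraproduct_compactness inhabited_algebra (par := fun _ n => n)
  model_T_up (inhabits j_false) directed finsat.
have [th [Dth b_th] th_phi] := Delta_entails_cover TM (Hb j_false).1.
by have [_] := Hb (exist _ th (conj Dth th_phi)); apply.
Qed.

End QfDefinability.

Lemma inhabited_of_constant (L : language) (c : sym L) :
  arity c = 0 -> forall A : algebra L, inhabited A.
Proof. by move=> c0 A; constructor; apply: (@op L A c) => -[k]; rewrite c0. Qed.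

Definition qf_below (L : language) (k : nat) (th : formula L) :=
  qfree th /\ forall n, free_var th n -> n < k.

Section ModelCompletion.
Variables (L : language) (K : class L) (Tstar : theory L).
Hypothesis inhabited_algebra : forall A : algebra L, inhabited A.
Hypothesis K_universal : universal_class K.
Hypothesis Tstar_completion : model_completion Tstar (Th K).

Lemma model_Th (A : algebra L) : K A -> model (Th K) A.
Proof. by move=> KA phi [_ K_phi]; apply: K_phi. Qed.

Lemma universal_Th_Tstar phi : universal phi -> sentence phi ->
  consequence (Th K) phi <-> consequence Tstar phi.
Proof. by case: Tstar_completion => _ _ + _; apply. Qed.

Lemma Tstar_model_in_K (N : algebra L) : model Tstar N -> K N.
Proof.
move=> TN; case: K_universal => _ K_sub K_ultraprod.
have K_up I (M : I -> algebra L) U : ultrafilter U -> (forall i, K (M i)) -> K (up_alg M U).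
  by move=> HU KM; apply: K_ultraprod HU KM (up_is_ultraproduct M HU).
have N_univ phi : universal phi -> sentence phi ->
    (forall M, K M -> forall v : nat -> M, sat v phi) -> forall v : nat -> N, sat v phi.
  move=> univ sent K_phi; apply: (proj1 (universal_Th_Tstar univ sent)) TN.
  by move=> A ThA; apply: ThA; split.
have [M [e [KM emb]]] := embedding_of_universal_theory inhabited_algebra K_up N_univ.
exact: K_sub KM emb.
Qed.

Lemma K_embeds_in_Tstar_model (A : algebra L) :
  K A -> exists (N : algebra L) (e : A -> N), model Tstar N /\ embedding e.
Proof.
move=> KA; apply: (embedding_of_universal_theory inhabited_algebra).
  by move=> I M U HU; apply: (model_up HU (fun i => inhabited_algebra (M i))).
move=> phi univ sent Tstar_phi.
exact: (proj2 (universal_Th_Tstar univ sent) Tstar_phi A (model_Th KA)).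
Qed.

Lemma Tstar_extensions_agree (A N1 N2 : algebra L) (e1 : A -> N1) (e2 : A -> N2) phi
    (v : nat -> A) :
  model (Th K) A -> model Tstar N1 -> model Tstar N2 -> embedding e1 -> embedding e2 ->
  sat (fun n => e1 (v n)) phi -> sat (fun n => e2 (v n)) phi.
Proof.
case: Tstar_completion => _ _ _ /[apply] /(_ phi v) [all_ext|no_ext] TN1 TN2 emb1 emb2.
  by move=> _; apply: all_ext.
by move/(no_ext _ _ TN1 emb1).
Qed.

(* Two tuples in models of Tstar with the same quantifier-free type embed a common
   substructure, which lies in K, so completeness of Tstar plus its diagram applies. *)
Lemma Tstar_qf_type_preserves k phi (N1 N2 : algebra L) (a1 : nat -> N1) (a2 : nat -> N2) :
  0 < k -> (forall n, free_var phi n -> n < k) -> model Tstar N1 -> model Tstar N2 ->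
  (forall th, qf_below k th -> sat a1 th -> sat a2 th) -> sat a1 phi -> sat a2 phi.
Proof.
move=> k_gt0 phi_k TN1 TN2 qf_type.
pose clamp n := if n < k then n else 0.
have eq_below (t t' : term L) : qf_below k (FEq (rename clamp t) (rename clamp t')).
  by split=> // n [] /term_occ_rename [m ->]; rewrite /clamp; case: ifP.
have same_equations (t t' : term L) :
    teval (fun n => a1 (clamp n)) t = teval (fun n => a1 (clamp n)) t' <->
    teval (fun n => a2 (clamp n)) t = teval (fun n => a2 (clamp n)) t'.
  rewrite -!(teval_rename a1 clamp) -!(teval_rename a2 clamp).
  split; first exact: (qf_type _ (eq_below t t')).
  by move=> E2; apply: NNPP => /(qf_type (FNot (FEq _ _)) (eq_below t t')); apply.
have [C [c [e1 [e2 [emb1 emb2 c1 c2]]]]] := common_substructure same_equations.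
have KC : K C by case: K_universal => _ K_sub _; apply: K_sub (Tstar_model_in_K TN1) emb1.
have sat_c (N : algebra L) (a : nat -> N) (e : C -> N) :
    (forall n, e (c n) = a (clamp n)) -> sat a phi <-> sat (fun n => e (c n)) phi.
  by move=> ec; apply: sat_ext => n /phi_k lt_n; rewrite ec /clamp lt_n.
rewrite (sat_c _ _ _ c1) (sat_c _ _ _ c2).
exact: Tstar_extensions_agree (model_Th KC) TN1 TN2 emb1 emb2.
Qed.

Lemma Tstar_qf_definable k phi : 0 < k -> (forall n, free_var phi n -> n < k) ->
  exists al, qf_below k al /\
    forall (N : algebra L) (a : nat -> N), model Tstar N -> (sat a phi <-> sat a al).
Proof.
move=> k_gt0 phi_k; apply: (definable_of_preserved inhabited_algebra).
- by split.
- by split.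
- by move=> p q [qp fp] [qq fq]; split=> // n /= [/fp|/fq].
- by move=> p q [qp fp] [qq fq]; split=> // n /= [/fp|/fq].
- by move=> N1 N2 a1 a2 TN1 TN2; apply: Tstar_qf_type_preserves.
Qed.

End ModelCompletion.

Definition tup4 (X : Type) (x1 x2 x3 x4 : X) (n : nat) : X := nth x1 [:: x1; x2; x3; x4] n.

Lemma agrees4P (X : Type) (w : nat -> X) x1 x2 x3 x4 :
  agrees4 w x1 x2 x3 x4 <-> forall n, n < 4 -> w n = tup4 x1 x2 x3 x4 n.
Proof.
split=> [[w0 w1 w2 w3] [|[|[|[|n]]]] //|H].
by split; [apply: (H 0)|apply: (H 1)|apply: (H 2)|apply: (H 3)].
Qed.

Section Quadruples.
Variable L : language.

Lemma sat_tup4 (M : algebra L) (x1 x2 x3 x4 : M) phi :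
  (forall n, free_var phi n -> n < 4) ->
  sat (tup4 x1 x2 x3 x4) phi <-> forall w, agrees4 w x1 x2 x3 x4 -> sat w phi.
Proof.
move=> phi4; split=> [H w /agrees4P w_x|]; last by apply; apply/agrees4P.
by rewrite (sat_ext (w := tup4 x1 x2 x3 x4)) // => n /phi4; apply: w_x.
Qed.

Lemma sat_forall_from4 (X : Type) (M : algebra L) (e : X -> M) (x1 x2 x3 x4 : X) phi :
  sat (fun n => e (tup4 x1 x2 x3 x4 n)) (forall_from 4 phi) <->
  forall w, agrees4 w (e x1) (e x2) (e x3) (e x4) -> sat w phi.
Proof.
have e_tup4 n : e (tup4 x1 x2 x3 x4 n) = tup4 (e x1) (e x2) (e x3) (e x4) n.
  by case: n => [|[|[|[|n]]]] //=; rewrite /tup4 /= !nth_nil.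
rewrite sat_forall_from; split=> H w.
  by move/agrees4P => w_x; apply: H => n lt_n; rewrite w_x // e_tup4.
by move=> w_v; apply: H; apply/agrees4P => n lt_n; rewrite w_v // e_tup4.
Qed.

End Quadruples.

Section ParametricDefinition.
Variables (L : language) (K : class L) (Tstar : theory L).
Hypothesis inhabited_algebra : forall A : algebra L, inhabited A.
Hypothesis K_universal : universal_class K.
Hypothesis Tstar_completion : model_completion Tstar (Th K).
Variable xi : formula L.
Hypothesis xi_qf : qfree xi.
Hypothesis xi_defines : forall A : algebra L, K A -> forall a1 a2 b1 b2 : A,
  Cg b1 b2 a1 a2 <->
  (forall (B : algebra L) (e : A -> B), K B -> embedding e ->
     forall w : nat -> B, agrees4 w (e a1) (e a2) (e b1) (e b2) -> sat w xi).

(* Completeness of Tstar plus the diagram of A makes the right-hand side independent of the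
   model of Tstar extending A, and universal formulas descend along embeddings. *)
Lemma Cg_iff_sat_in_Tstar_model (A N : algebra L) (e : A -> N) (a1 a2 b1 b2 : A) :
  K A -> model Tstar N -> embedding e ->
  Cg b1 b2 a1 a2 <-> sat (fun n => e (tup4 a1 a2 b1 b2 n)) (forall_from 4 xi).
Proof.
move=> KA TN emb; rewrite sat_forall_from4; split=> [Cg_a|xi_N].
  have KN := Tstar_model_in_K inhabited_algebra K_universal Tstar_completion TN.
  exact: (proj1 (xi_defines KN _ _ _ _) (Cg_hom emb.1 Cg_a) N id KN (embedding_id N)).
apply/(xi_defines KA) => B e' KB emb' w.
have [N' [g [TN' emb_g]]] := K_embeds_in_Tstar_model inhabited_algebra Tstar_completion KB.
have /(sat_universal_embedding emb_g (universal_forall_from 4 xi_qf)) :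
    sat (fun n => g (e' (tup4 a1 a2 b1 b2 n))) (forall_from 4 xi).
  apply: (Tstar_extensions_agree Tstar_completion (model_Th KA) TN TN' emb
            (embedding_comp emb' emb_g)).
  exact/sat_forall_from4.
by move/sat_forall_from4; apply.
Qed.

End ParametricDefinition.

Theorem proposition5p1 (L : language) (K : class L) :
  (exists c : sym L, arity c = 0) ->
  universal_class K ->
  param_def_pc K ->
  has_model_completion (Th K) ->
  qf_def_pc K.
Proof.
move=> [c c0] K_universal [xi [xi_qf xi_defines]] [Tstar Tstar_completion].
have inhabited_algebra := inhabited_of_constant c0.
have [al [[al_qf al_4] al_def]] := Tstar_qf_definable inhabited_algebra K_universal
  Tstar_completion (isT : 0 < 4) (@free_var_forall_from L 4 xi).
exists al; split=> // A KA a1 a2 b1 b2.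
have [N [e [TN emb]]] :=
  K_embeds_in_Tstar_model inhabited_algebra Tstar_completion KA.
rewrite (Cg_iff_sat_in_Tstar_model inhabited_algebra K_universal Tstar_completion xi_qf
  xi_defines _ _ _ _ KA TN emb) al_def // -(sat_qfree_embedding _ emb al_qf).
exact: sat_tup4.
Qed.
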